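(* Let $\nu\geq\frac12$ and $0<B\leq\sqrt{\frac{\pi}{e}}$, and set $x_0:=\frac{\pi}{B^2}$. If $z>0$ satisfies $$2z\;\leq\;\log x_0-\log\log x_0+\frac12\,\frac{\log\log x_0}{\log x_0},$$ then $K_\nu(z)\geq K_{1/2}(z)\geq B$.
   Context: $K_\nu$ denotes the modified Bessel function of the second kind of real order $\nu$, for real argument $z>0$; in particular $K_{1/2}(z)=e^{-z}\sqrt{\pi/(2z)}$. *)

From Stdlib Require Import Reals.
From Coquelicot Require Import Coquelicot.
Open Scope R_scope.

(* Modified Bessel function of the second kind, real order nu, real argument z > 0,
   via the standard integral representation (DLMF 10.32.9):
   K_nu(z) = \int_0^oo exp(-z cosh t) cosh(nu t) dt. *)
Definition besselK (nu z : R) : R :=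
  RInt_gen (fun t => exp (- z * cosh t) * cosh (nu * t))
           (at_point 0) (Rbar_locally p_infty).

(* K_nu(z) is the improper integral over [0, +oo) of the kernel
   k_nu(z,t) = exp(-z cosh t) cosh(nu t).
   - Improper integrals of nonnegative continuous functions with bounded
     partial integrals converge, and their value is the limit of the partial
     integrals (completeness of R).
   - The kernel is nonnegative, decays like exp(-t), and increases with the
     order nu >= 0 (cosh is nondecreasing on [0, +oo)); comparing partial
     integrals gives K_{1/2}(z) <= K_nu(z) for nu >= 1/2.
   - The Gaussian integral int_0^x exp(-u^2) du tends to sqrt(PI)/2, proved by
     the classical trick that G(x)^2 + int_0^1 exp(-x^2(1+t^2))/(1+t^2) dt is
     constant.  The substitution u = sqrt(2z) sinh(t/2) then yields the closed
     form K_{1/2}(z) = exp(-z) sqrt(PI/(2z)).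
   - Finally K_{1/2}(z)^2 = PI / (w e^w) with w = 2z, and the hypothesis on z
     gives w e^w <= x0 = PI/B^2 through a two-term lower approximation of the
     Lambert W function, whence K_{1/2}(z) >= B. *)

From Stdlib Require Import Reals Lra.
From Stdlib Require Import Classical_Prop.
From Coquelicot Require Import Coquelicot.
Open Scope R_scope.

(* Instances of Coquelicot's generic lemmas at the real line, so that
   [auto_derive] can discharge continuity and integrability side goals. *)
Lemma continuous_of_ex_derive (f : R -> R) (x : R) : ex_derive f x -> continuous f x.
Proof. apply (ex_derive_continuous (K := R_AbsRing) (V := R_NormedModule)). Qed.

Lemma ex_RInt_of_continuous (f : R -> R) (a b : R) :
  (forall x, continuous f x) -> ex_RInt f a b.
Proof. intros Hf. apply (ex_RInt_continuous (V := R_CompleteNormedModule)); auto. Qed.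

Lemma exp_le (x y : R) : x <= y -> exp x <= exp y.
Proof.
  intros H. destruct (Req_dec x y) as [->|Hne]; [lra|].
  apply Rlt_le, exp_increasing. lra.
Qed.

Lemma zero_derive_const (F : R -> R) : (forall y, is_derive F y 0) -> forall x, F x = F 0.
Proof.
  intros HF x.
  assert (H : is_RInt (fun _ => 0) 0 x (minus (F x) (F 0))).
  { apply (is_RInt_derive (V := R_CompleteNormedModule)); auto.
    intros; apply continuous_const. }
  apply (is_RInt_unique (V := R_CompleteNormedModule)) in H.
  rewrite (RInt_const (V := R_CompleteNormedModule)) in H.
  unfold minus, plus, opp, scal in H; simpl in H; unfold mult in H; simpl in H. lra.
Qed.

(* A nondecreasing bounded function on [0, +oo) has a finite limit at +oo
   (its supremum, given by the completeness of R). *)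
Lemma is_lim_incr_bounded (I : R -> R) (C : R) :
  (forall a b, 0 <= a <= b -> I a <= I b) -> (forall b, 0 <= b -> I b <= C) ->
  exists L : R, is_lim I p_infty L.
Proof.
  intros Hincr Hbnd.
  set (E := fun y => exists b, 0 <= b /\ y = I b).
  destruct (completeness E) as [L [HLub HLleast]].
  - exists C. intros y [b [Hb ->]]. auto.
  - exists (I 0), 0. split; [lra | reflexivity].
  - exists L. apply is_lim_spec. intros [eps Heps]; simpl.
    assert (Hnear : exists b0, 0 <= b0 /\ L - eps < I b0).
    { apply NNPP. intros Hnone.
      assert (L <= L - eps); [|lra].
      apply HLleast. intros y [b [Hb ->]].
      destruct (Rle_lt_dec (I b) (L - eps)) as [Hle|Hlt]; auto.
      exfalso. apply Hnone. exists b. auto. }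
    destruct Hnear as [b0 [Hb0 Hclose]].
    exists b0. intros b Hb.
    assert (I b0 <= I b) by (apply Hincr; lra).
    assert (I b <= L) by (apply HLub; exists b; split; [lra | reflexivity]).
    rewrite Rabs_left1; lra.
Qed.

Lemma RInt_gen_of_partial (f : R -> R) (L : R) :
  (forall b, ex_RInt f 0 b) -> is_lim (fun b => RInt f 0 b) p_infty L ->
  RInt_gen f (at_point 0) (Rbar_locally p_infty) = L.
Proof.
  intros Hf HL. apply is_RInt_gen_unique.
  intros P [eps HP]. apply is_lim_spec in HL. destruct (HL eps) as [M HM].
  apply Filter_prod with (fun a => a = 0) (fun b => M < b).
  - reflexivity.
  - exists M. auto.
  - intros a b -> Hb. exists (RInt f 0 b). split.
    + apply (RInt_correct (V := R_CompleteNormedModule)), Hf.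
    + apply HP, HM, Hb.
Qed.

Lemma is_lim_partial_nonneg (f : R -> R) (C : R) :
  (forall a b, ex_RInt f a b) -> (forall t, 0 <= t -> 0 <= f t) ->
  (forall b, 0 <= b -> RInt f 0 b <= C) ->
  is_lim (fun b => RInt f 0 b) p_infty (RInt_gen f (at_point 0) (Rbar_locally p_infty)).
Proof.
  intros Hf Hpos Hbnd.
  destruct (is_lim_incr_bounded (fun b => RInt f 0 b) C) as [L HL]; auto.
  - intros a b Hab.
    rewrite <- (RInt_Chasles (V := R_CompleteNormedModule) f 0 a b) by auto.
    assert (0 <= RInt f a b) by (apply RInt_ge_0; [lra | apply Hf | intros; apply Hpos; lra]).
    unfold plus; simpl; lra.
  - rewrite (RInt_gen_of_partial f L); auto.
Qed.

Definition gauss (t : R) : R := exp (- (t * t)).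
Definition gauss_int (x : R) : R := RInt gauss 0 x.
Definition gauss_aux (x t : R) : R := exp (- (x * x) * (1 + t * t)) / (1 + t * t).
Definition gauss_aux_int (x : R) : R := RInt (gauss_aux x) 0 1.
Definition half_sqrt_pi : R := sqrt PI / 2.

Lemma one_plus_sq_pos (t : R) : 0 < 1 + t * t.
Proof. nra. Qed.

Lemma gauss_continuous (t : R) : continuous gauss t.
Proof. apply continuous_of_ex_derive. unfold gauss. auto_derive. auto. Qed.

Lemma is_derive_gauss_int (x : R) : is_derive gauss_int x (gauss x).
Proof.
  apply (is_derive_RInt gauss gauss_int 0 x).
  - exists (mkposreal 1 Rlt_0_1). intros y _.
    apply (RInt_correct (V := R_CompleteNormedModule)).
    apply ex_RInt_of_continuous, gauss_continuous.
  - apply gauss_continuous.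
Qed.

Lemma is_derive_gauss_aux (t x : R) :
  is_derive (fun u => gauss_aux u t) x (-2 * x * exp (- (x * x) * (1 + t * t))).
Proof.
  assert (Ht := one_plus_sq_pos t).
  unfold gauss_aux. auto_derive; [lra | field; lra].
Qed.

(* Differentiation under the integral sign, followed by the substitution
   [u = x t]: the auxiliary integral decreases at the rate [2 G'(x) G(x)]. *)
Lemma is_derive_gauss_aux_int (x : R) :
  is_derive gauss_aux_int x (-2 * exp (- (x * x)) * gauss_int x).
Proof.
  set (dh := fun u t => -2 * u * exp (- (u * u) * (1 + t * t))).
  assert (Hdh : forall u t, Derive (fun v => gauss_aux v t) u = dh u t).
  { intros u t. apply is_derive_unique, is_derive_gauss_aux. }
  replace (-2 * exp (- (x * x)) * gauss_int x)
    with (RInt (fun t => Derive (fun u => gauss_aux u t) x) 0 1).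
  - apply (is_derive_RInt_param gauss_aux 0 1 x).
    + exists (mkposreal 1 Rlt_0_1). intros y _ t _. eexists. apply is_derive_gauss_aux.
    + intros t _. apply continuity_2d_pt_ext with (f := dh).
      { intros; symmetry; apply Hdh. }
      unfold dh. repeat apply continuity_2d_pt_mult.
      * apply continuity_2d_pt_const.
      * apply continuity_2d_pt_id1.
      * apply continuity_1d_2d_pt_comp with (f := exp) (g := fun u v => - (u * u) * (1 + v * v)).
        { apply derivable_continuous_pt, derivable_exp. }
        apply continuity_2d_pt_mult.
        { apply continuity_2d_pt_opp, continuity_2d_pt_mult; apply continuity_2d_pt_id1. }
        apply continuity_2d_pt_plus; [apply continuity_2d_pt_const|].
        apply continuity_2d_pt_mult; apply continuity_2d_pt_id2.
    + exists (mkposreal 1 Rlt_0_1). intros y _.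
      apply ex_RInt_of_continuous. intros t. apply continuous_of_ex_derive.
      unfold gauss_aux. auto_derive. generalize (one_plus_sq_pos t); lra.
  - rewrite (RInt_ext _ (fun t => scal (-2 * exp (- (x * x))) (scal x (gauss (x * t + 0))))).
    + rewrite (RInt_scal (V := R_CompleteNormedModule)).
      * rewrite (RInt_comp_lin (V := R_CompleteNormedModule)).
        -- unfold gauss_int. rewrite Rmult_0_r, Rplus_0_r, Rmult_1_r, Rplus_0_r. reflexivity.
        -- apply ex_RInt_of_continuous, gauss_continuous.
      * apply ex_RInt_of_continuous. intros t. apply continuous_of_ex_derive.
        unfold gauss, scal; simpl; unfold mult; simpl. auto_derive. auto.
    + intros t _. rewrite Hdh. unfold dh, gauss, scal; simpl; unfold mult; simpl.
      replace (- (x * x) * (1 + t * t)) with (- (x * x) + - ((x * t + 0) * (x * t + 0))) by ring.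
      rewrite exp_plus. ring.
Qed.

(* [A(0) = int_0^1 dt / (1 + t^2) = atan 1 = PI/4]. *)
Lemma gauss_aux_int_0 : gauss_aux_int 0 = PI / 4.
Proof.
  unfold gauss_aux_int.
  rewrite (RInt_ext (V := R_CompleteNormedModule) _ (fun t => / (1 + t ^ 2))).
  2: { intros t _. unfold gauss_aux. replace (- (0 * 0) * (1 + t * t)) with 0 by ring.
       rewrite exp_0. unfold Rdiv. rewrite Rmult_1_l. f_equal. ring. }
  rewrite <- atan_1.
  replace (atan 1) with (minus (atan 1) (atan 0))
    by (rewrite atan_0; unfold minus, plus, opp; simpl; ring).
  apply (is_RInt_unique (V := R_CompleteNormedModule)).
  apply (is_RInt_derive (V := R_CompleteNormedModule)).
  - intros. apply is_derive_Reals, derivable_pt_lim_atan.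
  - intros t _. apply continuous_of_ex_derive. auto_derive. generalize (one_plus_sq_pos t); nra.
Qed.

(* The classical trick: [G(x)^2 + A(x)] has zero derivative, and equals
   [A(0) = atan 1 = PI/4] at the origin. *)
Lemma gauss_int_sq_plus_aux (x : R) : gauss_int x * gauss_int x + gauss_aux_int x = PI / 4.
Proof.
  set (F := fun y => gauss_int y * gauss_int y + gauss_aux_int y).
  assert (HF : forall y, is_derive F y 0).
  { intros y.
    assert (H : is_derive F y (gauss y * gauss_int y + gauss_int y * gauss y
                                 + -2 * exp (- (y * y)) * gauss_int y)).
    { apply (is_derive_plus (K := R_AbsRing) (V := R_NormedModule)).
      - apply (is_derive_mult (K := R_AbsRing)); try apply is_derive_gauss_int.
        intros; apply Rmult_comm.
      - apply is_derive_gauss_aux_int. }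
    replace 0 with (gauss y * gauss_int y + gauss_int y * gauss y
                    + -2 * exp (- (y * y)) * gauss_int y) by (unfold gauss; ring).
    exact H. }
  assert (HG0 : gauss_int 0 = 0) by apply (RInt_point (V := R_CompleteNormedModule)).
  change (F x = PI / 4). rewrite (zero_derive_const F HF x).
  unfold F. rewrite HG0, gauss_aux_int_0. ring.
Qed.

Lemma gauss_aux_int_bounds (x : R) : 0 <= gauss_aux_int x <= exp (- (x * x)).
Proof.
  assert (Hex : ex_RInt (gauss_aux x) 0 1).
  { apply ex_RInt_of_continuous. intros t. apply continuous_of_ex_derive.
    unfold gauss_aux. auto_derive. generalize (one_plus_sq_pos t); lra. }
  split.
  - apply RInt_ge_0; [lra | exact Hex |]. intros t _. unfold gauss_aux.
    apply Rlt_le, Rdiv_lt_0_compat; [apply exp_pos | apply one_plus_sq_pos].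
  - replace (exp (- (x * x))) with (RInt (fun _ => exp (- (x * x))) 0 1).
    + apply RInt_le; [lra | exact Hex | apply ex_RInt_of_continuous; intros; apply continuous_const |].
      intros t Ht. unfold gauss_aux.
      assert (Hexp : exp (- (x * x) * (1 + t * t)) <= exp (- (x * x))).
      { apply exp_le. nra. }
      assert (Hinv : / (1 + t * t) <= 1).
      { rewrite <- Rinv_1. apply Rinv_le_contravar; nra. }
      unfold Rdiv. generalize (exp_pos (- (x * x) * (1 + t * t))). nra.
    + rewrite (RInt_const (V := R_CompleteNormedModule)).
      unfold scal; simpl; unfold mult; simpl. ring.
Qed.

Lemma half_sqrt_pi_pos : 0 < half_sqrt_pi.
Proof. unfold half_sqrt_pi. generalize (sqrt_lt_R0 PI PI_RGT_0). lra. Qed.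

Lemma half_sqrt_pi_sq : half_sqrt_pi * half_sqrt_pi = PI / 4.
Proof.
  unfold half_sqrt_pi.
  replace (sqrt PI / 2 * (sqrt PI / 2)) with (sqrt PI * sqrt PI / 4) by field.
  rewrite sqrt_sqrt; [lra | generalize PI_RGT_0; lra].
Qed.

Lemma gauss_int_nonneg (x : R) : 0 <= x -> 0 <= gauss_int x.
Proof.
  intros Hx. apply RInt_ge_0; [exact Hx | apply ex_RInt_of_continuous, gauss_continuous |].
  intros; unfold gauss; apply Rlt_le, exp_pos.
Qed.

(* Quantitative convergence [G(x) -> sqrt(PI)/2]: the defect
   [sqrt(PI)/2 - G(x) = A(x) / (sqrt(PI)/2 + G(x))] is at most [exp(-x^2) / (sqrt(PI)/2)]. *)
Lemma gauss_int_error (x : R) :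
  0 <= x -> 0 <= half_sqrt_pi - gauss_int x <= exp (- (x * x)) / half_sqrt_pi.
Proof.
  intros Hx.
  assert (HG := gauss_int_nonneg x Hx). assert (Hs := half_sqrt_pi_pos).
  assert (Hsq := gauss_int_sq_plus_aux x). assert (HA := gauss_aux_int_bounds x).
  rewrite <- half_sqrt_pi_sq in Hsq.
  assert (Hdefect : half_sqrt_pi - gauss_int x = gauss_aux_int x / (half_sqrt_pi + gauss_int x)).
  { apply Rmult_eq_reg_r with (half_sqrt_pi + gauss_int x); [|lra].
    unfold Rdiv. rewrite Rmult_assoc, Rinv_l by lra. nra. }
  rewrite Hdefect. split.
  - apply Rmult_le_pos; [lra | apply Rlt_le, Rinv_0_lt_compat; lra].
  - unfold Rdiv. apply Rmult_le_compat; try lra.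
    + apply Rlt_le, Rinv_0_lt_compat; lra.
    + apply Rinv_le_contravar; lra.
Qed.

Lemma is_lim_gauss_tail : is_lim (fun x => exp (- (x * x))) p_infty 0.
Proof.
  apply (is_lim_comp exp (fun x => - (x * x)) p_infty 0 m_infty).
  - exact is_lim_exp_m.
  - apply (is_lim_opp (fun x => x * x) p_infty p_infty).
    apply (is_lim_mult (fun x => x) (fun x => x) p_infty p_infty p_infty); try apply is_lim_id.
    simpl; auto.
  - exists 0. intros; discriminate.
Qed.

Lemma is_lim_gauss_int : is_lim gauss_int p_infty half_sqrt_pi.
Proof.
  apply (is_lim_le_le_loc (fun x => half_sqrt_pi + - / half_sqrt_pi * exp (- (x * x)))
                          (fun _ => half_sqrt_pi)).
  - exists 0. intros x Hx. generalize (gauss_int_error x ltac:(lra)). unfold Rdiv. lra.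
  - replace (Finite half_sqrt_pi) with (Finite (half_sqrt_pi + - / half_sqrt_pi * 0)) by (f_equal; ring).
    apply is_lim_plus'; [apply is_lim_const|].
    apply (is_lim_scal_l _ _ _ (Finite 0)), is_lim_gauss_tail.
  - apply is_lim_const.
Qed.

Definition kernel (nu z t : R) : R := exp (- z * cosh t) * cosh (nu * t).

Lemma besselK_kernel (nu z : R) :
  besselK nu z = RInt_gen (kernel nu z) (at_point 0) (Rbar_locally p_infty).
Proof. reflexivity. Qed.

Lemma kernel_continuous (nu z t : R) : continuous (kernel nu z) t.
Proof. apply continuous_of_ex_derive. unfold kernel, cosh. auto_derive. auto. Qed.

Lemma ex_RInt_kernel (nu z a b : R) : ex_RInt (kernel nu z) a b.
Proof. apply ex_RInt_of_continuous, kernel_continuous. Qed.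

Lemma cosh_pos (t : R) : 0 < cosh t.
Proof. unfold cosh. generalize (exp_pos t) (exp_pos (- t)). lra. Qed.

Lemma kernel_nonneg (nu z t : R) : 0 <= kernel nu z t.
Proof. unfold kernel. generalize (exp_pos (- z * cosh t)) (cosh_pos (nu * t)). nra. Qed.

(* [cosh] is nondecreasing on [0, +oo): with [1 <= X = e^x <= Y = e^y],
   [(Y + 1/Y) - (X + 1/X) = (Y - X) (1 - 1/(XY)) >= 0]. *)
Lemma cosh_le (x y : R) : 0 <= x <= y -> cosh x <= cosh y.
Proof.
  intros Hxy. unfold cosh. rewrite !exp_Ropp.
  assert (HXY : exp x <= exp y) by (apply exp_le; lra).
  assert (HX1 : 1 <= exp x) by (rewrite <- exp_0; apply exp_le; lra).
  set (X := exp x) in *. set (Y := exp y) in *.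
  assert (Hdiff : / X - / Y = (Y - X) * (/ X * / Y)) by (field; lra).
  assert (HinvX : 0 < / X <= 1) by (split; [apply Rinv_0_lt_compat | rewrite <- Rinv_1; apply Rinv_le_contravar]; lra).
  assert (HinvY : 0 < / Y <= 1) by (split; [apply Rinv_0_lt_compat | rewrite <- Rinv_1; apply Rinv_le_contravar]; lra).
  assert (/ X * / Y <= 1) by nra.
  nra.
Qed.

(* The kernel increases with the order: [cosh (mu t) <= cosh (nu t)] for [0 <= mu <= nu], [t >= 0]. *)
Lemma kernel_le_order (mu nu z t : R) :
  0 <= mu <= nu -> 0 <= t -> kernel mu z t <= kernel nu z t.
Proof.
  intros Hmu Ht. unfold kernel. apply Rmult_le_compat_l; [apply Rlt_le, exp_pos|].
  apply cosh_le. nra.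
Qed.

(* A crude quadratic lower bound, enough for integrability of the kernel. *)
Lemma cosh_ge_quadratic (t : R) : 0 <= t -> t * t / 8 <= cosh t.
Proof.
  intros Ht. unfold cosh.
  assert (Hsplit : exp t = exp (t / 2) * exp (t / 2)) by (rewrite <- exp_plus; f_equal; lra).
  generalize (exp_ineq1_le (t / 2)) (exp_pos (- t)). nra.
Qed.

(* Exponential decay of the kernel, uniform in [t >= 0]: the Gaussian-type
   decay of [exp (- z cosh t)] beats the growth of [cosh (nu t) <= exp (nu t)]. *)
Lemma kernel_exp_bound (nu z t : R) :
  0 < z -> 0 <= nu -> 0 <= t ->
  kernel nu z t <= exp (2 * (nu + 1) * (nu + 1) / z) * exp (- t).
Proof.
  intros Hz Hnu Ht. unfold kernel.
  assert (Hcosh : cosh (nu * t) <= exp (nu * t)).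
  { unfold cosh. assert (exp (- (nu * t)) <= exp (nu * t)) by (apply exp_le; nra). lra. }
  apply Rle_trans with (exp (- z * cosh t) * exp (nu * t)).
  { apply Rmult_le_compat_l; [apply Rlt_le, exp_pos | exact Hcosh]. }
  rewrite <- !exp_plus. apply exp_le.
  assert (Hq := cosh_ge_quadratic t Ht).
  assert (Hquad : (nu + 1) * t - z * (t * t / 8) <= 2 * (nu + 1) * (nu + 1) / z).
  { apply Rmult_le_reg_l with z; [exact Hz|].
    replace (z * (2 * (nu + 1) * (nu + 1) / z)) with (2 * (nu + 1) * (nu + 1)) by (field; lra).
    generalize (Rle_0_sqr (z * t - 4 * (nu + 1))). unfold Rsqr. nra. }
  nra.
Qed.

(* Uniform bound on the partial integrals: [int_0^b C e^(-t) dt <= C]. *)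
Lemma kernel_partial_bound (nu z b : R) :
  0 < z -> 0 <= nu -> 0 <= b ->
  RInt (kernel nu z) 0 b <= exp (2 * (nu + 1) * (nu + 1) / z).
Proof.
  intros Hz Hnu Hb.
  set (C := exp (2 * (nu + 1) * (nu + 1) / z)).
  assert (HC : 0 < C) by apply exp_pos.
  assert (Hcont : forall t, continuous (fun t => C * exp (- t)) t).
  { intros t. apply continuous_of_ex_derive. auto_derive. auto. }
  apply Rle_trans with (RInt (fun t => C * exp (- t)) 0 b).
  { apply RInt_le; auto using ex_RInt_kernel, ex_RInt_of_continuous.
    intros; apply kernel_exp_bound; lra. }
  assert (Hint : is_RInt (fun t => C * exp (- t)) 0 b
                   (minus (- C * exp (- b)) (- C * exp (- 0)))).
  { apply (is_RInt_derive (V := R_CompleteNormedModule) (fun t => - C * exp (- t))); auto.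
    intros. auto_derive; [auto | ring]. }
  rewrite (is_RInt_unique (V := R_CompleteNormedModule) _ _ _ _ Hint).
  unfold minus, plus, opp; simpl. rewrite Ropp_0, exp_0.
  generalize (exp_pos (- b)). nra.
Qed.

Lemma is_lim_besselK_partial (nu z : R) :
  0 < z -> 0 <= nu -> is_lim (fun b => RInt (kernel nu z) 0 b) p_infty (besselK nu z).
Proof.
  intros Hz Hnu. apply (is_lim_partial_nonneg _ (exp (2 * (nu + 1) * (nu + 1) / z))).
  - apply ex_RInt_kernel.
  - intros; apply kernel_nonneg.
  - intros; apply kernel_partial_bound; auto.
Qed.

Lemma besselK_le_order (mu nu z : R) : 0 < z -> 0 <= mu <= nu -> besselK mu z <= besselK nu z.
Proof.
  intros Hz Hmu.
  change (Rbar_le (besselK mu z) (besselK nu z)).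
  apply (is_lim_le_loc (fun b => RInt (kernel mu z) 0 b) (fun b => RInt (kernel nu z) 0 b) p_infty).
  - exists 0. intros b Hb. apply RInt_le; [lra | apply ex_RInt_kernel | apply ex_RInt_kernel |].
    intros t Ht. apply kernel_le_order; lra.
  - apply is_lim_besselK_partial; lra.
  - apply is_lim_besselK_partial; lra.
Qed.

Lemma cosh_half_angle (t : R) : cosh t = 1 + 2 * (sinh (1/2 * t) * sinh (1/2 * t)).
Proof.
  unfold cosh, sinh.
  assert (E1 : exp t = exp (1/2 * t) * exp (1/2 * t)) by (rewrite <- exp_plus; f_equal; lra).
  assert (E2 : exp (- t) = exp (- (1/2 * t)) * exp (- (1/2 * t))) by (rewrite <- exp_plus; f_equal; lra).
  assert (E3 : exp (1/2 * t) * exp (- (1/2 * t)) = 1)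
    by (rewrite <- exp_plus; replace (1/2 * t + - (1/2 * t)) with 0 by lra; apply exp_0).
  rewrite E1, E2. nra.
Qed.

(* An antiderivative of the order-1/2 kernel, obtained by the substitution
   [u = sqrt(2z) sinh(t/2)], which turns [exp(-z cosh t) cosh(t/2) dt] into
   [exp(-z) (2 / sqrt(2z)) exp(-u^2) du]. *)
Definition half_antiderivative (z t : R) : R :=
  exp (- z) * (2 / sqrt (2 * z)) * gauss_int (sqrt (2 * z) * sinh (1/2 * t)).

Lemma is_derive_half_antiderivative (z t : R) :
  0 < z -> is_derive (half_antiderivative z) t (kernel (1/2) z t).
Proof.
  intros Hz.
  set (s := sqrt (2 * z)).
  assert (Hs : 0 < s) by (apply sqrt_lt_R0; lra).
  assert (Hs2 : s * s = 2 * z) by (apply sqrt_sqrt; lra).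
  assert (Hinner : is_derive (fun t => s * sinh (1/2 * t)) t (s * cosh (1/2 * t) / 2)).
  { unfold sinh, cosh. auto_derive; [auto | field]. }
  assert (Hcomp := is_derive_comp gauss_int _ t _ _ (is_derive_gauss_int _) Hinner).
  assert (H := is_derive_scal _ t (exp (- z) * (2 / s)) _ Hcomp).
  unfold scal in H; simpl in H; unfold mult in H; simpl in H.
  unfold half_antiderivative. fold s.
  replace (kernel (1/2) z t)
    with (exp (- z) * (2 / s) * (s * cosh (1/2 * t) / 2 * gauss (s * sinh (1/2 * t)))).
  { exact H. }
  unfold kernel, gauss. rewrite (cosh_half_angle t).
  replace (- ((s * sinh (1/2 * t)) * (s * sinh (1/2 * t))))
    with (- (2 * z) * (sinh (1/2 * t) * sinh (1/2 * t))) by (rewrite <- Hs2; ring).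
  replace (- z * (1 + 2 * (sinh (1/2 * t) * sinh (1/2 * t))))
    with (- z + - (2 * z) * (sinh (1/2 * t) * sinh (1/2 * t))) by ring.
  rewrite exp_plus. field. lra.
Qed.

Lemma half_antiderivative_0 (z : R) : half_antiderivative z 0 = 0.
Proof.
  unfold half_antiderivative. replace (1/2 * 0) with 0 by ring.
  rewrite sinh_0, Rmult_0_r.
  replace (gauss_int 0) with 0 by (symmetry; apply (RInt_point (V := R_CompleteNormedModule))).
  ring.
Qed.

Lemma half_partial_integral (z b : R) :
  0 < z -> RInt (kernel (1/2) z) 0 b = half_antiderivative z b.
Proof.
  intros Hz. apply (is_RInt_unique (V := R_CompleteNormedModule)).
  replace (half_antiderivative z b)
    with (minus (half_antiderivative z b) (half_antiderivative z 0))
    by (rewrite half_antiderivative_0; unfold minus, plus, opp; simpl; ring).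
  apply (is_RInt_derive (V := R_CompleteNormedModule)).
  - intros; apply is_derive_half_antiderivative, Hz.
  - intros; apply kernel_continuous.
Qed.

(* [s sinh(t/2) -> +oo], using that [sinh] is increasing with inverse [arcsinh]. *)
Lemma is_lim_scaled_sinh (s : R) : 0 < s -> is_lim (fun t => s * sinh (1/2 * t)) p_infty p_infty.
Proof.
  intros Hs. apply is_lim_spec. intros M. exists (2 * arcsinh (M / s)). intros t Ht.
  assert (Hlt : sinh (arcsinh (M / s)) < sinh (1/2 * t)) by (apply sinh_lt; lra).
  rewrite sinh_arcsinh in Hlt.
  apply Rmult_lt_compat_l with (r := s) in Hlt; [|exact Hs].
  replace (s * (M / s)) with M in Hlt by (field; lra). exact Hlt.
Qed.

Lemma is_lim_half_antiderivative (z : R) :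
  0 < z -> is_lim (half_antiderivative z) p_infty (exp (- z) * sqrt (PI / (2 * z))).
Proof.
  intros Hz.
  assert (Hs : 0 < sqrt (2 * z)) by (apply sqrt_lt_R0; lra).
  replace (Finite (exp (- z) * sqrt (PI / (2 * z))))
    with (Rbar_mult (exp (- z) * (2 / sqrt (2 * z))) half_sqrt_pi).
  - apply is_lim_scal_l.
    apply (is_lim_comp gauss_int _ p_infty half_sqrt_pi p_infty).
    + apply is_lim_gauss_int.
    + apply is_lim_scaled_sinh, Hs.
    + exists 0. intros; discriminate.
  - simpl. f_equal. unfold half_sqrt_pi. rewrite sqrt_div_alt by lra. field. lra.
Qed.

Lemma besselK_half (z : R) : 0 < z -> besselK (1/2) z = exp (- z) * sqrt (PI / (2 * z)).
Proof.
  intros Hz. rewrite besselK_kernel.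
  apply (RInt_gen_of_partial (kernel (1/2) z)); [intros; apply ex_RInt_kernel |].
  apply (is_lim_ext (half_antiderivative z)).
  - intros b. symmetry. apply half_partial_integral, Hz.
  - apply is_lim_half_antiderivative, Hz.
Qed.

Lemma xexp_le (a b : R) : 0 <= a <= b -> a * exp a <= b * exp b.
Proof.
  intros Hab. apply Rmult_le_compat; try lra.
  - apply Rlt_le, exp_pos.
  - apply exp_le; lra.
Qed.

(* A two-term asymptotic lower approximation of the Lambert function: for
   [x >= e] and [L = ln x], the point [w = L - ln L + ln L / (2L)] satisfies
   [w e^w <= x].  Writing [a = ln L / L], one has [w e^w = x (w/L) e^(a/2)]
   and [w/L = 1 - a + a/(2L) <= 1 - a/2 <= e^(-a/2)]. *)
Lemma lambert_lower (x : R) :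
  exp 1 <= x ->
  let w := ln x - ln (ln x) + / 2 * (ln (ln x) / ln x) in w * exp w <= x.
Proof.
  intros Hx w.
  assert (Hxpos : 0 < x) by (generalize (exp_pos 1); lra).
  set (L := ln x) in *. set (lL := ln L) in *.
  assert (HL : 1 <= L).
  { unfold L. rewrite <- (ln_exp 1). destruct (Req_dec (exp 1) x) as [->|Hne]; [lra|].
    apply Rlt_le, ln_increasing; [apply exp_pos | lra]. }
  assert (HlL : 0 <= lL).
  { unfold lL. rewrite <- ln_1. destruct (Req_dec 1 L) as [<-|Hne]; [lra|].
    apply Rlt_le, ln_increasing; lra. }
  set (a := lL / L).
  assert (Ha : 0 <= a) by (unfold a; apply Rmult_le_pos; [lra | apply Rlt_le, Rinv_0_lt_compat; lra]).
  assert (Hexpw : exp w = x * / L * exp (a / 2)).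
  { unfold w. replace (/ 2 * (lL / L)) with (a / 2) by (unfold a; field; lra).
    unfold Rminus. rewrite !exp_plus, exp_Ropp.
    unfold L at 1, lL. rewrite !exp_ln by lra. reflexivity. }
  assert (Hratio : w / L <= exp (- (a / 2))).
  { replace (w / L) with (1 - a + a / (2 * L)) by (unfold w, a; field; lra).
    assert (a / (2 * L) <= a / 2).
    { unfold Rdiv. apply Rmult_le_compat_l; [lra | apply Rinv_le_contravar; lra]. }
    generalize (exp_ineq1_le (- (a / 2))). lra. }
  rewrite Hexpw.
  replace (w * (x * / L * exp (a / 2))) with (x * ((w / L) * exp (a / 2))) by (field; lra).
  rewrite <- (Rmult_1_r x) at 2. apply Rmult_le_compat_l; [lra|].
  replace 1 with (exp (- (a / 2)) * exp (a / 2))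
    by (rewrite <- exp_plus; replace (- (a / 2) + a / 2) with 0 by ring; apply exp_0).
  apply Rmult_le_compat_r; [apply Rlt_le, exp_pos | exact Hratio].
Qed.

Lemma scale_ge_e (B : R) : 0 < B -> B <= sqrt (PI / exp 1) -> exp 1 <= PI / B ^ 2.
Proof.
  intros HB HBs.
  assert (HPI := PI_RGT_0). assert (He := exp_pos 1).
  assert (HB2 : B * B <= PI / exp 1).
  { rewrite <- (sqrt_sqrt (PI / exp 1)) by (apply Rlt_le, Rdiv_lt_0_compat; lra). nra. }
  apply Rmult_le_reg_r with (B * B); [nra|].
  replace (PI / B ^ 2 * (B * B)) with PI by (field; lra).
  apply Rmult_le_reg_r with (/ exp 1); [apply Rinv_0_lt_compat; lra|].
  replace (exp 1 * (B * B) * / exp 1) with (B * B) by (field; lra). exact HB2.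
Qed.

(* [K_{1/2}(z)^2 = PI / (2z e^(2z))], so [K_{1/2}(z) >= B] as soon as [2z e^(2z) <= PI / B^2]. *)
Lemma half_closed_form_ge (B z : R) :
  0 < B -> 0 < z -> 2 * z * exp (2 * z) <= PI / B ^ 2 -> B <= exp (- z) * sqrt (PI / (2 * z)).
Proof.
  intros HB Hz Hw.
  assert (HPI := PI_RGT_0).
  set (K := exp (- z) * sqrt (PI / (2 * z))).
  assert (HK : 0 < K) by (apply Rmult_lt_0_compat; [apply exp_pos | apply sqrt_lt_R0, Rdiv_lt_0_compat; lra]).
  assert (Hden : 0 < 2 * z * exp (2 * z)) by (generalize (exp_pos (2 * z)); nra).
  assert (HKsq : K * K * (2 * z * exp (2 * z)) = PI).
  { unfold K.
    replace (exp (- z) * sqrt (PI / (2 * z)) * (exp (- z) * sqrt (PI / (2 * z))) * (2 * z * exp (2 * z)))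
      with ((exp (- z) * exp (- z) * exp (2 * z)) * (sqrt (PI / (2 * z)) * sqrt (PI / (2 * z))) * (2 * z)) by ring.
    rewrite sqrt_sqrt by (apply Rlt_le, Rdiv_lt_0_compat; lra).
    rewrite <- !exp_plus. replace (- z + - z + 2 * z) with 0 by ring. rewrite exp_0. field. lra. }
  assert (HBsq : B * B * (2 * z * exp (2 * z)) <= PI).
  { apply Rmult_le_reg_r with (/ (B * B)); [apply Rinv_0_lt_compat; nra|].
    replace (B * B * (2 * z * exp (2 * z)) * / (B * B)) with (2 * z * exp (2 * z)) by (field; lra).
    replace (PI * / (B * B)) with (PI / B ^ 2) by (field; lra). exact Hw. }
  assert (B * B <= K * K) by (apply Rmult_le_reg_r with (2 * z * exp (2 * z)); lra).
  nra.
Qed.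

Theorem proposition4 (nu B z : R) :
  1/2 <= nu -> 0 < B -> B <= sqrt (PI / exp 1) -> 0 < z ->
  let x0 := PI / B ^ 2 in
  2 * z <= ln x0 - ln (ln x0) + / 2 * (ln (ln x0) / ln x0) ->
  besselK (1/2) z <= besselK nu z /\ B <= besselK (1/2) z.
Proof.
  intros Hnu HB HBs Hz x0 Hw.
  split.
  - apply besselK_le_order; lra.
  - rewrite besselK_half by exact Hz.
    apply half_closed_form_ge; [exact HB | exact Hz |].
    apply Rle_trans with ((ln x0 - ln (ln x0) + / 2 * (ln (ln x0) / ln x0))
                          * exp (ln x0 - ln (ln x0) + / 2 * (ln (ln x0) / ln x0))).
    + apply xexp_le. lra.
    + apply lambert_lower, scale_ge_e; assumption.
Qed.
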